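(* Consider a particle in the plane with dimensionless canonical observables $x,y,p_x,p_y$ ($[x,p_x]=[y,p_y]=i$, other commutators zero) and Hamiltonian $H(t)=\tfrac12\big(p_x^2+p_y^2+\beta(t)^2(x^2+y^2)\big)-\beta(t)M_z$, $M_z=xp_y-yp_x$, where $\beta:\mathbb R\to\mathbb R$ is piecewise continuous, periodic with period $1$, satisfies $\beta(k)=0$ for all $k\in\mathbb Z$, and $\int_0^1\beta(t)\,dt=0$. Let $u(t)$ be the $4\times4$ evolution matrix, $(x(t),y(t),p_x(t),p_y(t))^T=u(t)(x,y,p_x,p_y)^T$ for the classical or Heisenberg variables. Suppose the evolution is a loop that closes for the first time after $n>1$ periods, i.e. $u(n)=\mathbb 1$ and $u(j)\neq\mathbb 1$ for $j=1,\dots,n-1$. Then the loop center $\mathbf X=\frac1n\int_0^n(x(t),y(t))\,dt$ vanishes identically.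
   Context: Time is dimensionless (period of $\beta$ equal to $1$), $\hbar=1$, unit mass. The Hamiltonian is quadratic, so the classical and Heisenberg trajectories are given by the same real matrix $u(t)$. *)

From Stdlib Require Import Reals Lra.
From Coquelicot Require Import Coquelicot.
Open Scope R_scope.

(* Piecewise continuity on a compact interval [a,b]: a finite partition
   a = t_0 < t_1 < ... < t_m = b such that on each open piece (t_k, t_{k+1})
   f agrees with a continuous function g (i.e. f extends continuously to
   each closed piece, so it has finite one-sided limits at the break points). *)
Definition piecewise_continuous_on (f : R -> R) (a b : R) : Prop :=
  exists (m : nat) (t : nat -> R),
    t O = a /\ t m = b /\
    (forall k, (k < m)%nat -> t k < t (S k)) /\
    (forall k, (k < m)%nat ->
       exists g : R -> R, (forall s, continuous g s) /\
         (forall s, t k < s < t (S k) -> g s = f s)).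

Definition piecewise_continuous (f : R -> R) : Prop :=
  forall a b, a < b -> piecewise_continuous_on f a b.

(* 4x4 real matrices as functions of indices 0..3,
   ordering of phase-space coordinates: (x, y, p_x, p_y). *)
Definition mat4 := nat -> nat -> R.

Definition is_id4 (M : mat4) : Prop :=
  forall i j, (i < 4)%nat -> (j < 4)%nat -> M i j = if Nat.eqb i j then 1 else 0.

(* Hamiltonian matrix of H = 1/2 (p_x^2 + p_y^2 + b^2 (x^2+y^2)) - b (x p_y - y p_x):
   dx/dt = p_x + b y,  dy/dt = p_y - b x,
   dp_x/dt = -b^2 x + b p_y,  dp_y/dt = -b^2 y - b p_x. *)
Definition Amat (b : R) : mat4 := fun i k =>
  match i, k with
  | O, S O => b     | O, S (S O) => 1
  | S O, O => - b   | S O, S (S (S O)) => 1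
  | S (S O), O => - (b * b) | S (S O), S (S (S O)) => b
  | S (S (S O)), S O => - (b * b) | S (S (S O)), S (S O) => - b
  | _, _ => 0
  end.

Definition mulA (b : R) (M : mat4) (i j : nat) : R :=
  Amat b i 0%nat * M 0%nat j + Amat b i 1%nat * M 1%nat j
  + Amat b i 2%nat * M 2%nat j + Amat b i 3%nat * M 3%nat j.

(* u is the evolution matrix: u(t) = 1 + int_0^t A(beta(s)) u(s) ds
   (integral form of u' = A u, u(0) = 1, appropriate for piecewise
   continuous beta). *)
Definition evolution_matrix (beta : R -> R) (u : R -> mat4) : Prop :=
  forall t i j, (i < 4)%nat -> (j < 4)%nat ->
    is_RInt (fun s => mulA (beta s) (u s) i j) 0 t
            (u t i j - (if Nat.eqb i j then 1 else 0)).

(* Loop center X = (1/n) int_0^n (x(t), y(t)) dt, for initial data z;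
   component i = 0 (x) or 1 (y). *)
Definition loop_center (u : R -> mat4) (n : nat) (z : nat -> R) (i : nat) : R :=
  / INR n * RInt (fun t => u t i 0%nat * z 0%nat + u t i 1%nat * z 1%nat
                           + u t i 2%nat * z 2%nat + u t i 3%nat * z 3%nat) 0 (INR n).

From Stdlib Require Import Reals Lra Lia.
From Coquelicot Require Import Coquelicot.
Open Scope R_scope.

(* In the frame rotating with angle [phase beta t = int_0^t beta], the magnetic term cancels
   and each planar coordinate obeys the Hill equation [q'' = - beta(t)^2 q]; hence [u t] is
   the rotation by [- phase beta t] applied to [m t (x) 1], where [m t] is the 2x2
   fundamental matrix of the Hill equation.  As [beta] is 1-periodic with mean zero, the
   phase is 1-periodic and vanishes at the integers, and [m (t + k) = m t M^k] with the
   monodromy [M = m 1] of determinant 1.  A loop closing first after [n > 1] periods gives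
   [M^n = 1] and [M <> 1], which forces [1 + M + ... + M^(n-1) = 0].  The integral of the
   position over [0, n] is the integral over [0, 1] of the sum of its [n] translates by
   integers, which is linear in these powers of [M], hence zero. *)

(* Specializations to [R] of Coquelicot's generic rules, so that [apply] infers the
   functions involved. *)
Lemma continuous_Rplus (f g : R -> R) (x : R) :
  continuous f x -> continuous g x -> continuous (fun t => f t + g t) x.
Proof. exact (continuous_plus f g x). Qed.

Lemma continuous_Rminus (f g : R -> R) (x : R) :
  continuous f x -> continuous g x -> continuous (fun t => f t - g t) x.
Proof. exact (continuous_minus f g x). Qed.

Lemma continuous_Rmult (f g : R -> R) (x : R) :
  continuous f x -> continuous g x -> continuous (fun t => f t * g t) x.
Proof. exact (continuous_mult f g x). Qed.

Lemma is_derive_Rplus (f g : R -> R) (x df dg : R) :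
  is_derive f x df -> is_derive g x dg -> is_derive (fun t => f t + g t) x (df + dg).
Proof. exact (is_derive_plus f g x df dg). Qed.

Lemma is_derive_Rminus (f g : R -> R) (x df dg : R) :
  is_derive f x df -> is_derive g x dg -> is_derive (fun t => f t - g t) x (df - dg).
Proof. exact (is_derive_minus f g x df dg). Qed.

Lemma is_derive_Rmult (f g : R -> R) (x df dg : R) :
  is_derive f x df -> is_derive g x dg ->
  is_derive (fun t => f t * g t) x (df * g x + f x * dg).
Proof. intros Hf Hg. exact (is_derive_mult f g x df dg Hf Hg Rmult_comm). Qed.

Lemma is_derive_value (f : R -> R) (x l l' : R) : is_derive f x l -> l = l' -> is_derive f x l'.
Proof. now intros H <-. Qed.

Lemma continuous_shift (f : R -> R) (c x : R) :
  continuous f (x + c) -> continuous (fun t => f (t + c)) x.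
Proof.
  intro Hf. apply (continuous_comp (fun t => t + c) f); [| exact Hf].
  apply continuous_Rplus; [apply continuous_id | apply continuous_const].
Qed.

Lemma is_derive_shift (f : R -> R) (c x l : R) :
  is_derive f (x + c) l -> is_derive (fun t => f (t + c)) x l.
Proof.
  intro Hf. replace l with (1 * l) by ring.
  apply (is_derive_comp f (fun t => t + c)); [exact Hf|].
  auto_derive; [exact I | ring].
Qed.

Lemma continuous_periodic (f : R -> R) (s : R) :
  (forall t, f (t + 1) = f t) -> continuous f s -> continuous f (s + 1).
Proof.
  intros Hper Hf. apply (continuous_ext (fun t => f (t + -1))).
  - intro t. replace t with ((t + -1) + 1) at 2 by ring. apply eq_sym, Hper.
  - apply continuous_shift. now replace (s + 1 + -1) with s by ring.
Qed.

Lemma locally_open_interval (P : R -> Prop) (x y s : R) :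
  x < s < y -> (forall r, x < r < y -> P r) -> locally s P.
Proof.
  intros Hs HP.
  assert (Hpos : 0 < Rmin (s - x) (y - s)) by (apply Rmin_pos; lra).
  exists (mkposreal _ Hpos). intros r Hr.
  change (Rabs (r - s) < Rmin (s - x) (y - s)) in Hr.
  apply Rabs_def2 in Hr.
  pose proof (Rmin_l (s - x) (y - s)). pose proof (Rmin_r (s - x) (y - s)).
  apply HP; lra.
Qed.

Lemma continuous_of_continuous_piece (f g : R -> R) (x y s : R) :
  (forall r, continuous g r) -> (forall r, x < r < y -> g r = f r) ->
  x < s < y -> continuous f s.
Proof.
  intros Hg Hgf Hs. apply (continuous_ext_loc f g s); [| apply Hg].
  exact (locally_open_interval _ x y s Hs Hgf).
Qed.

Lemma piecewise_continuous_ind (f : R -> R) (Q : R -> Prop) (a b : R) :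
  piecewise_continuous f -> a <= b -> Q a ->
  (forall x y (g : R -> R), x < y -> (forall r, continuous g r) ->
     (forall r, x < r < y -> g r = f r) -> Q x -> Q y) ->
  Q b.
Proof.
  intros Hpc Hab Ha Hstep.
  destruct (Req_dec a b) as [<-|Hne]; [exact Ha|].
  destruct (Hpc a b ltac:(lra)) as [m [t [Ht0 [Htm [Hinc Hpieces]]]]].
  assert (Hk : forall k, (k <= m)%nat -> Q (t k)).
  { induction k as [|k IH]; intros Hk; [now rewrite Ht0|].
    destruct (Hpieces k ltac:(lia)) as [g [Hg Hgf]].
    assert (Hinc_k : t k < t (S k)) by (apply Hinc; lia).
    apply (Hstep (t k) (t (S k)) g Hinc_k Hg Hgf), IH; lia. }
  rewrite <- Htm. apply Hk; lia.
Qed.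

Lemma ex_RInt_piecewise_continuous (f : R -> R) (a b : R) :
  piecewise_continuous f -> ex_RInt f a b.
Proof.
  intros Hpc.
  assert (Hle : forall a b, a <= b -> ex_RInt f a b).
  { clear a b. intros a b Hab. apply (piecewise_continuous_ind f (ex_RInt f a) a b Hpc Hab).
    - apply ex_RInt_point.
    - intros x y g Hxy Hg Hgf Hx. apply (ex_RInt_Chasles _ _ x _ Hx).
      apply (ex_RInt_ext g).
      + intros r Hr. rewrite Rmin_left, Rmax_right in Hr by lra. auto.
      + apply (ex_RInt_continuous (V:=R_CompleteNormedModule)). intros; apply Hg. }
  destruct (Rle_or_lt a b) as [H|H]; [auto|].
  apply ex_RInt_swap, Hle; lra.
Qed.

Lemma eq_of_is_derive_zero (f F : R -> R) (a b : R) :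
  piecewise_continuous f -> (forall x, continuous F x) ->
  (forall s, continuous f s -> is_derive F s 0) -> a <= b -> F b = F a.
Proof.
  intros Hpc HF HF' Hab.
  apply (piecewise_continuous_ind f (fun y => F y = F a) a b Hpc Hab); [reflexivity|].
  intros x y g Hxy Hg Hgf Hx. rewrite <- Hx.
  destruct (MVT_gen F x y (fun _ => 0)) as [c [_ Hc]]; [| | lra].
  - intros s Hs. rewrite Rmin_left, Rmax_right in Hs by lra.
    apply HF', (continuous_of_continuous_piece f g x y); auto.
  - intros s _. apply continuity_pt_filterlim, HF.
Qed.

Definition hill_solution (beta a b : R -> R) : Prop :=
  (forall x, continuous a x) /\ (forall x, continuous b x) /\
  (forall s, continuous beta s ->
     is_derive a s (b s) /\ is_derive b s (- (beta s * beta s) * a s)).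

Lemma hill_solution_zero_step (beta a b g : R -> R) (x y : R) :
  hill_solution beta a b -> x < y -> (forall r, continuous g r) ->
  (forall r, x < r < y -> g r = beta r) -> a x = 0 -> b x = 0 -> a y = 0 /\ b y = 0.
Proof.
  intros [Ha [Hb Hab']] Hxy Hg Hgb Hax Hbx.
  destruct (continuity_ab_maj (fun s => g s * g s) x y ltac:(lra)) as [smax [Hmax _]].
  { intros s _. apply continuity_pt_filterlim, continuous_Rmult; apply Hg. }
  set (c := 1 + g smax * g smax).
  set (E := fun s => (a s * a s + b s * b s) * exp (- (c * s))).
  set (dE := fun s =>
    (2 * a s * b s * (1 - g s * g s) - c * (a s * a s + b s * b s)) * exp (- (c * s))).
  (* [c] bounds [1 + beta^2] on the piece, so the damped energy [E] is nonincreasing. *)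
  assert (HdE : forall s, x <= s <= y -> dE s <= 0).
  { intros s Hs. unfold dE. pose proof (Hmax s Hs) as Hgs. fold c in Hgs.
    apply Rmult_le_0_r; [| apply Rlt_le, exp_pos].
    assert (2 * a s * b s * (1 - g s * g s) <= (1 + g s * g s) * (a s * a s + b s * b s)).
    { assert (0 <= (a s - b s) ^ 2) by apply pow2_ge_0.
      assert (0 <= g s * g s * (a s + b s) ^ 2)
        by (apply Rmult_le_pos; [apply Rle_0_sqr | apply pow2_ge_0]).
      nra. }
    assert (0 <= a s * a s + b s * b s) by nra.
    unfold c; nra. }
  destruct (MVT_gen E x y dE) as [xi [Hxi HE]].
  - intros s Hs. rewrite Rmin_left, Rmax_right in Hs by lra.
    destruct (Hab' s (continuous_of_continuous_piece beta g x y s Hg Hgb Hs)) as [Da Db].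
    unfold E. apply (is_derive_value _ _
      ((b s * a s + a s * b s
          + ((- (beta s * beta s) * a s) * b s + b s * (- (beta s * beta s) * a s)))
         * exp (- (c * s)) + (a s * a s + b s * b s) * (- c * exp (- (c * s))))).
    + apply (is_derive_Rmult (fun s => a s * a s + b s * b s) (fun s => exp (- (c * s)))).
      * apply is_derive_Rplus; apply is_derive_Rmult; assumption.
      * auto_derive; [exact I | ring].
    + unfold dE. rewrite (Hgb s Hs). ring.
  - intros s _. apply continuity_pt_filterlim.
    apply continuous_Rmult.
    + apply continuous_Rplus; apply continuous_Rmult; auto.
    + apply continuous_exp_comp, (continuous_opp (fun s => c * s)).
      apply continuous_Rmult; [apply continuous_const | apply continuous_id].
  - rewrite Rmin_left, Rmax_right in Hxi by lra.
    assert (HEx : E x = 0) by (unfold E; rewrite Hax, Hbx; ring).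
    assert (HEy : E y <= 0) by (pose proof (HdE xi Hxi); nra).
    unfold E in HEy. pose proof (exp_pos (- (c * y))).
    assert (a y * a y + b y * b y <= 0) by nra.
    split; nra.
Qed.

Lemma hill_solution_zero (beta a b : R -> R) :
  piecewise_continuous beta -> hill_solution beta a b -> a 0 = 0 -> b 0 = 0 ->
  forall T, 0 <= T -> a T = 0 /\ b T = 0.
Proof.
  intros Hpc Hsol Ha0 Hb0 T HT.
  apply (piecewise_continuous_ind beta (fun y => a y = 0 /\ b y = 0) 0 T Hpc HT); [auto|].
  intros x y g Hxy Hg Hgb [Hax Hbx].
  exact (hill_solution_zero_step beta a b g x y Hsol Hxy Hg Hgb Hax Hbx).
Qed.

Lemma hill_solution_lincomb (beta a1 b1 a2 b2 : R -> R) (p q : R) :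
  hill_solution beta a1 b1 -> hill_solution beta a2 b2 ->
  hill_solution beta (fun t => p * a1 t + q * a2 t) (fun t => p * b1 t + q * b2 t).
Proof.
  intros [Ha1 [Hb1 D1]] [Ha2 [Hb2 D2]]. split; [|split].
  - intro x. apply continuous_Rplus; apply continuous_Rmult; auto; apply continuous_const.
  - intro x. apply continuous_Rplus; apply continuous_Rmult; auto; apply continuous_const.
  - intros s Hs. destruct (D1 s Hs) as [Da1 Db1]. destruct (D2 s Hs) as [Da2 Db2]. split.
    + apply is_derive_Rplus; apply is_derive_scal; auto.
    + replace (- (beta s * beta s) * (p * a1 s + q * a2 s))
        with (p * (- (beta s * beta s) * a1 s) + q * (- (beta s * beta s) * a2 s)) by ring.
      apply is_derive_Rplus; apply is_derive_scal; auto.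
Qed.

Lemma hill_solution_shift (beta a b : R -> R) :
  (forall t, beta (t + 1) = beta t) -> hill_solution beta a b ->
  hill_solution beta (fun t => a (t + 1)) (fun t => b (t + 1)).
Proof.
  intros Hper [Ha [Hb D]]. split; [|split].
  - intro x. apply continuous_shift, Ha.
  - intro x. apply continuous_shift, Hb.
  - intros s Hs. destruct (D (s + 1) (continuous_periodic beta s Hper Hs)) as [Da Db].
    rewrite Hper in Db. split; apply is_derive_shift; assumption.
Qed.

Lemma hill_solution_expand (beta a b a1 b1 a2 b2 : R -> R) :
  piecewise_continuous beta -> hill_solution beta a b ->
  hill_solution beta a1 b1 -> hill_solution beta a2 b2 ->
  a1 0 = 1 -> b1 0 = 0 -> a2 0 = 0 -> b2 0 = 1 ->
  forall T, 0 <= T -> a T = a 0 * a1 T + b 0 * a2 T /\ b T = a 0 * b1 T + b 0 * b2 T.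
Proof.
  intros Hpc Hsol H1 H2 Ha1 Hb1 Ha2 Hb2 T HT.
  pose proof (hill_solution_lincomb beta _ _ _ _ 1 (-1) Hsol
                (hill_solution_lincomb beta _ _ _ _ (a 0) (b 0) H1 H2)) as Hdiff.
  destruct (hill_solution_zero beta _ _ Hpc Hdiff) with (T := T) as [Ea Eb]; auto;
    cbv beta; [rewrite Ha1, Ha2 | rewrite Hb1, Hb2 | ..]; lra.
Qed.

Lemma hill_wronskian (beta a1 b1 a2 b2 : R -> R) :
  piecewise_continuous beta -> hill_solution beta a1 b1 -> hill_solution beta a2 b2 ->
  forall T, 0 <= T -> a1 T * b2 T - a2 T * b1 T = a1 0 * b2 0 - a2 0 * b1 0.
Proof.
  intros Hpc [Ha1 [Hb1 D1]] [Ha2 [Hb2 D2]] T HT.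
  apply (eq_of_is_derive_zero beta (fun t => a1 t * b2 t - a2 t * b1 t) 0 T Hpc); auto.
  - intro x. apply continuous_Rminus; apply continuous_Rmult; auto.
  - intros s Hs. destruct (D1 s Hs) as [Da1 Db1]. destruct (D2 s Hs) as [Da2 Db2].
    apply (is_derive_value _ _ ((b1 s * b2 s + a1 s * (- (beta s * beta s) * a2 s))
                                - (b2 s * b1 s + a2 s * (- (beta s * beta s) * a1 s)))); [|ring].
    apply is_derive_Rminus; apply is_derive_Rmult; assumption.
Qed.

Definition phase (beta : R -> R) (t : R) : R := RInt beta 0 t.

Lemma is_RInt_phase (beta : R -> R) (t : R) :
  piecewise_continuous beta -> is_RInt beta 0 t (phase beta t).
Proof.
  intro Hpc. apply (RInt_correct (V:=R_CompleteNormedModule)).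
  now apply ex_RInt_piecewise_continuous.
Qed.

Lemma continuous_phase (beta : R -> R) (x : R) :
  piecewise_continuous beta -> continuous (phase beta) x.
Proof.
  intro Hpc. apply (continuous_RInt_1 beta 0 x).
  apply filter_forall. intro t. now apply is_RInt_phase.
Qed.

Lemma is_derive_phase (beta : R -> R) (s : R) :
  piecewise_continuous beta -> continuous beta s -> is_derive (phase beta) s (beta s).
Proof.
  intros Hpc Hs. apply (is_derive_RInt beta (phase beta) 0 s); [| exact Hs].
  apply filter_forall. intro t. now apply is_RInt_phase.
Qed.

Lemma phase_0 (beta : R -> R) : phase beta 0 = 0.
Proof. apply (RInt_point (V:=R_CompleteNormedModule)). Qed.

Lemma phase_periodic (beta : R -> R) (k : nat) (T : R) :
  piecewise_continuous beta -> (forall t, beta (t + 1) = beta t) -> is_RInt beta 0 1 0 ->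
  0 <= T -> phase beta (T + INR k) = phase beta T.
Proof.
  intros Hpc Hper Hmean HT.
  assert (Hstep : forall t, 0 <= t -> phase beta (t + 1) = phase beta t).
  { intros t Ht.
    assert (H1 : phase beta 1 = 0)
      by exact (is_RInt_unique (V:=R_CompleteNormedModule) _ _ _ _ Hmean).
    enough (phase beta (t + 1) - phase beta t = phase beta (0 + 1) - phase beta 0) by
      (rewrite Rplus_0_l, H1, phase_0 in H; lra).
    apply (eq_of_is_derive_zero beta (fun t => phase beta (t + 1) - phase beta t) 0 t Hpc); auto.
    - intro x. apply continuous_Rminus; [apply continuous_shift|]; apply continuous_phase, Hpc.
    - intros s Hs. apply (is_derive_value _ _ (beta (s + 1) - beta s)); [| rewrite Hper; ring].
      apply is_derive_Rminus; [apply is_derive_shift|]; apply is_derive_phase; auto.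
      now apply continuous_periodic. }
  induction k as [|k IH]; [now rewrite Rplus_0_r|].
  rewrite S_INR, <- Rplus_assoc, Hstep; [exact IH|].
  pose proof (pos_INR k). lra.
Qed.

Lemma evolution_matrix_0 (beta : R -> R) (u : R -> mat4) (i j : nat) :
  evolution_matrix beta u -> (i < 4)%nat -> (j < 4)%nat ->
  u 0 i j = if Nat.eqb i j then 1 else 0.
Proof.
  intros Hev Hi Hj.
  pose proof (is_RInt_unique (V:=R_CompleteNormedModule) _ _ _ _ (Hev 0 i j Hi Hj)) as H.
  rewrite (RInt_point (V:=R_CompleteNormedModule)) in H. cbn in H. lra.
Qed.

Lemma continuous_evolution_matrix (beta : R -> R) (u : R -> mat4) (i j : nat) (x : R) :
  evolution_matrix beta u -> (i < 4)%nat -> (j < 4)%nat -> continuous (fun t => u t i j) x.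
Proof.
  intros Hev Hi Hj. set (d := if Nat.eqb i j then 1 else 0).
  apply (continuous_ext (fun t => (u t i j - d) + d)).
  { intro t. change (@eq R (u t i j - d + d) (u t i j)). ring. }
  apply continuous_Rplus; [| apply continuous_const].
  apply (continuous_RInt_1 (fun s => mulA (beta s) (u s) i j) 0 x).
  apply filter_forall. intro t. now apply Hev.
Qed.

Lemma continuous_Amat (beta : R -> R) (i k : nat) (s : R) :
  continuous beta s -> continuous (fun t => Amat (beta t) i k) s.
Proof.
  intro Hb.
  assert (Hsq : continuous (fun t => - (beta t * beta t)) s)
    by (apply (continuous_opp (fun t => beta t * beta t)), continuous_Rmult; exact Hb).
  assert (Hopp : continuous (fun t => - beta t) s) by apply (continuous_opp beta), Hb.
  assert (H0 : continuous (fun _ : R => 0) s) by apply continuous_const.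
  assert (H1 : continuous (fun _ : R => 1) s) by apply continuous_const.
  destruct i as [|[|[|[|i]]]], k as [|[|[|[|k]]]]; assumption.
Qed.

Lemma is_derive_evolution_matrix (beta : R -> R) (u : R -> mat4) (i j : nat) (s : R) :
  evolution_matrix beta u -> (i < 4)%nat -> (j < 4)%nat -> continuous beta s ->
  is_derive (fun t => u t i j) s (mulA (beta s) (u s) i j).
Proof.
  intros Hev Hi Hj Hb. set (d := if Nat.eqb i j then 1 else 0).
  apply (is_derive_ext (fun t => (u t i j - d) + d)).
  { intro t. change (@eq R (u t i j - d + d) (u t i j)). ring. }
  apply (is_derive_value _ _ (mulA (beta s) (u s) i j + 0)); [| ring].
  apply is_derive_Rplus; [| exact (is_derive_const d s)].
  apply (is_derive_RInt (fun t => mulA (beta t) (u t) i j) _ 0 s).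
  - apply filter_forall. intro t. now apply Hev.
  - assert (Hk : forall k, (k < 4)%nat -> continuous (fun t => Amat (beta t) i k * u t k j) s).
    { intros k Hk. apply continuous_Rmult.
      - now apply continuous_Amat.
      - now apply (continuous_evolution_matrix beta). }
    unfold mulA.
    apply continuous_Rplus; [apply continuous_Rplus; [apply continuous_Rplus|]|]; apply Hk; lia.
Qed.

Record mat2 := Mat2 { m11 : R; m12 : R; m21 : R; m22 : R }.

Definition mat2_zero : mat2 := Mat2 0 0 0 0.
Definition mat2_one : mat2 := Mat2 1 0 0 1.
Definition mat2_add (A B : mat2) : mat2 :=
  Mat2 (m11 A + m11 B) (m12 A + m12 B) (m21 A + m21 B) (m22 A + m22 B).
Definition mat2_mul (A B : mat2) : mat2 :=
  Mat2 (m11 A * m11 B + m12 A * m21 B) (m11 A * m12 B + m12 A * m22 B)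
       (m21 A * m11 B + m22 A * m21 B) (m21 A * m12 B + m22 A * m22 B).
Definition mat2_det (A : mat2) : R := m11 A * m22 A - m12 A * m21 A.
Definition mat2_dot (A B : mat2) : R :=
  m11 A * m11 B + m12 A * m12 B + m21 A * m21 B + m22 A * m22 B.

Fixpoint mat2_pow (A : mat2) (k : nat) : mat2 :=
  match k with O => mat2_one | S k => mat2_mul (mat2_pow A k) A end.

Fixpoint mat2_geom (A : mat2) (n : nat) : mat2 :=
  match n with O => mat2_zero | S n => mat2_add (mat2_geom A n) (mat2_pow A n) end.

Fixpoint sum_lt (f : nat -> R) (n : nat) : R :=
  match n with O => 0 | S n => sum_lt f n + f n end.

Lemma sum_lt_ext (f g : nat -> R) (n : nat) :
  (forall k, f k = g k) -> sum_lt f n = sum_lt g n.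
Proof. intro Hfg. induction n as [|n IH]; cbn [sum_lt]; [reflexivity | now rewrite IH, Hfg]. Qed.

Lemma mat2_mulA (A B C : mat2) : mat2_mul A (mat2_mul B C) = mat2_mul (mat2_mul A B) C.
Proof. destruct A, B, C; unfold mat2_mul; cbn; f_equal; ring. Qed.

Lemma mat2_mul1l (A : mat2) : mat2_mul mat2_one A = A.
Proof. destruct A; unfold mat2_mul; cbn; f_equal; ring. Qed.

Lemma sum_lt_mat2_dot_pow (C A : mat2) (n : nat) :
  sum_lt (fun k => mat2_dot C (mat2_pow A k)) n = mat2_dot C (mat2_geom A n).
Proof.
  induction n as [|n IH]; cbn [sum_lt mat2_geom].
  - unfold mat2_dot; cbn; ring.
  - rewrite IH. unfold mat2_dot, mat2_add; cbn; ring.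
Qed.

Lemma mat2_geom_shift (A : mat2) (n : nat) :
  mat2_add (mat2_mul (mat2_geom A n) A) mat2_one = mat2_add (mat2_geom A n) (mat2_pow A n).
Proof.
  induction n as [|n IH]; cbn [mat2_geom mat2_pow].
  - destruct A; unfold mat2_add, mat2_mul; cbn; f_equal; ring.
  - destruct (mat2_geom A n) as [s11 s12 s21 s22], (mat2_pow A n) as [p11 p12 p21 p22], A.
    unfold mat2_add, mat2_mul in *; cbn in *. injection IH as E11 E12 E21 E22.
    f_equal; lra.
Qed.

(* With trace 2 and determinant 1, [A - 1] is nilpotent. *)
Lemma mat2_pow_unipotent (A : mat2) (k : nat) :
  mat2_det A = 1 -> m11 A + m22 A = 2 ->
  mat2_pow A k = Mat2 (1 + INR k * (m11 A - 1)) (INR k * m12 A)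
                      (INR k * m21 A) (1 + INR k * (m22 A - 1)).
Proof.
  destruct A as [a b c d]; unfold mat2_det; cbn. intros Hdet Htr.
  assert (Hnil : (a - 1) * (a - 1) + b * c = 0) by (replace d with (2 - a) in Hdet by lra; nra).
  induction k as [|k IH]; cbn [mat2_pow].
  - unfold mat2_one; f_equal; cbn; ring.
  - rewrite IH, S_INR. unfold mat2_mul; cbn. replace d with (2 - a) by lra.
    assert (INR k * ((a - 1) * (a - 1) + b * c) = 0) by (rewrite Hnil; ring).
    f_equal; lra.
Qed.

Lemma mat2_geom_eq0 (A : mat2) (n : nat) :
  mat2_det A = 1 -> mat2_pow A n = mat2_one -> A <> mat2_one -> mat2_geom A n = mat2_zero.
Proof.
  intros Hdet Hpow Hne. destruct n as [|n]; [reflexivity|].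
  destruct (Req_dec (m11 A + m22 A) 2) as [Htr|Htr].
  - exfalso. apply Hne. rewrite (mat2_pow_unipotent A _ Hdet Htr) in Hpow.
    assert (Hn : INR (S n) <> 0) by (apply not_0_INR; lia).
    set (N := INR (S n)) in *.
    destruct A as [a b c d]. unfold mat2_one in *; cbn [m11 m12 m21 m22] in *.
    injection Hpow as E11 E12 E21 E22. f_equal; apply (Rmult_eq_reg_l N); auto; nra.
  - (* The geometric sum [S] satisfies [S A = S], and [A - 1] is invertible since
       [det (A - 1) = 2 - tr A]. *)
    pose proof (mat2_geom_shift A (S n)) as Hshift. rewrite Hpow in Hshift.
    destruct (mat2_geom A (S n)) as [s11 s12 s21 s22], A as [a b c d].
    unfold mat2_det, mat2_add, mat2_mul, mat2_one, mat2_zero in *; cbn [m11 m12 m21 m22] in *.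
    injection Hshift as E11 E12 E21 E22.
    set (D := (a - 1) * (d - 1) - b * c).
    assert (HD : D <> 0) by (intro; apply Htr; unfold D in *; nra).
    assert (Hrow : forall x y, x * a + y * c = x -> x * b + y * d = y -> x = 0 /\ y = 0).
    { intros x y Hx Hy. split; apply (Rmult_eq_reg_l D); auto.
      - replace (D * x) with ((x * a + y * c - x) * (d - 1) - (x * b + y * d - y) * c)
          by (unfold D; ring). rewrite Hx, Hy. ring.
      - replace (D * y) with ((x * b + y * d - y) * (a - 1) - (x * a + y * c - x) * b)
          by (unfold D; ring). rewrite Hx, Hy. ring. }
    destruct (Hrow s11 s12) as [-> ->], (Hrow s21 s22) as [-> ->]; auto; lra.
Qed.

Lemma continuous_sum_translates (f : R -> R) (n : nat) (x : R) :
  (forall x, continuous f x) -> continuous (fun t => sum_lt (fun k => f (t + INR k)) n) x.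
Proof.
  intro Hf. induction n as [|n IH]; cbn [sum_lt]; [apply continuous_const|].
  apply continuous_Rplus; [exact IH | apply continuous_shift, Hf].
Qed.

Lemma is_RInt_sum_translates (f : R -> R) (n : nat) :
  (forall x, continuous f x) ->
  is_RInt f 0 (INR n) (RInt (fun t => sum_lt (fun k => f (t + INR k)) n) 0 1).
Proof.
  intro Hf. induction n as [|n IH]; cbn [sum_lt].
  - replace (RInt (fun _ => 0) 0 1) with 0; [apply (is_RInt_point (V:=R_NormedModule))|].
    rewrite RInt_const. unfold scal; cbn; unfold mult; cbn. ring.
  - assert (Hint : forall g : R -> R, (forall x, continuous g x) -> ex_RInt g 0 1)
      by (intros g Hg; apply (ex_RInt_continuous (V:=R_CompleteNormedModule)); auto).
    rewrite (RInt_plus (V:=R_CompleteNormedModule));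
      [| apply Hint; intro; apply continuous_sum_translates, Hf
       | apply Hint; intro; apply continuous_shift, Hf].
    rewrite S_INR. apply (is_RInt_Chasles f 0 (INR n) (INR n + 1) _ _ IH).
    apply (is_RInt_ext (fun y => scal 1 (f (1 * y + - INR n + INR n)))).
    + intros x _. replace (1 * x + - INR n + INR n) with x by ring. apply Rmult_1_l.
    + apply (is_RInt_comp_lin (fun t => f (t + INR n)) 1 (- INR n) (INR n) (INR n + 1)).
      replace (1 * INR n + - INR n) with 0 by ring.
      replace (1 * (INR n + 1) + - INR n) with 1 by ring.
      apply (RInt_correct (V:=R_CompleteNormedModule)), Hint.
      intro; apply continuous_shift, Hf.
Qed.

Lemma RInt_eq0_of_sum_translates (f : R -> R) (n : nat) :
  (forall x, continuous f x) -> (forall t, 0 <= t <= 1 -> sum_lt (fun k => f (t + INR k)) n = 0) ->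
  RInt f 0 (INR n) = 0.
Proof.
  intros Hf Hsum.
  rewrite (is_RInt_unique (V:=R_CompleteNormedModule) _ _ _ _ (is_RInt_sum_translates f n Hf)).
  rewrite (RInt_ext (V:=R_CompleteNormedModule) _ (fun _ => 0)).
  - rewrite RInt_const. unfold scal; cbn; unfold mult; cbn. ring.
  - intros t Ht. rewrite Rmin_left, Rmax_right in Ht by lra. apply Hsum. lra.
Qed.

(* The matrix [R(-theta) (m (x) 1)] in the coordinates [(x, y, p_x, p_y)], where
   [c = cos theta] and [s = sin theta]. *)
Definition frame_to_lab (c s : R) (m : mat2) : mat4 := fun i j =>
  match i, j with
  | O, O => c * m11 m       | O, S O => s * m11 m
  | O, S (S O) => c * m12 m | O, S (S (S O)) => s * m12 m
  | S O, O => - s * m11 m   | S O, S O => c * m11 m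
  | S O, S (S O) => - s * m12 m | S O, S (S (S O)) => c * m12 m
  | S (S O), O => c * m21 m | S (S O), S O => s * m21 m
  | S (S O), S (S O) => c * m22 m | S (S O), S (S (S O)) => s * m22 m
  | S (S (S O)), O => - s * m21 m | S (S (S O)), S O => c * m21 m
  | S (S (S O)), S (S O) => - s * m22 m | S (S (S O)), S (S (S O)) => c * m22 m
  | _, _ => 0
  end.

Lemma is_id4_frame_to_lab (m : mat2) : is_id4 (frame_to_lab 1 0 m) <-> m = mat2_one.
Proof.
  split.
  - intro Hid. destruct m as [a b c d]. unfold mat2_one. f_equal.
    + pose proof (Hid 0%nat 0%nat ltac:(lia) ltac:(lia)) as H; cbn in H; lra.
    + pose proof (Hid 0%nat 2%nat ltac:(lia) ltac:(lia)) as H; cbn in H; lra.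
    + pose proof (Hid 2%nat 0%nat ltac:(lia) ltac:(lia)) as H; cbn in H; lra.
    + pose proof (Hid 2%nat 2%nat ltac:(lia) ltac:(lia)) as H; cbn in H; lra.
  - intros -> i j Hi Hj.
    destruct i as [|[|[|[|i]]]], j as [|[|[|[|j]]]]; try lia; cbn; ring.
Qed.

Section RotatingFrame.

Variables (beta : R -> R) (u : R -> mat4).
Hypothesis Hpc : piecewise_continuous beta.
Hypothesis Hper : forall t, beta (t + 1) = beta t.
Hypothesis Hmean : is_RInt beta 0 1 0.
Hypothesis Hev : evolution_matrix beta u.

Definition rotated_fst (f g : R -> R) (t : R) : R :=
  cos (phase beta t) * f t - sin (phase beta t) * g t.
Definition rotated_snd (f g : R -> R) (t : R) : R :=
  sin (phase beta t) * f t + cos (phase beta t) * g t.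

Lemma rotated_inv (f g : R -> R) (t : R) :
  f t = cos (phase beta t) * rotated_fst f g t + sin (phase beta t) * rotated_snd f g t /\
  g t = - sin (phase beta t) * rotated_fst f g t + cos (phase beta t) * rotated_snd f g t.
Proof.
  unfold rotated_fst, rotated_snd. pose proof (sin2_cos2 (phase beta t)) as H.
  unfold Rsqr in H. split; [rewrite <- (Rmult_1_l (f t)) at 1 | rewrite <- (Rmult_1_l (g t)) at 1];
    rewrite <- H; ring.
Qed.

Lemma continuous_rotated (f g : R -> R) (x : R) :
  continuous f x -> continuous g x ->
  continuous (rotated_fst f g) x /\ continuous (rotated_snd f g) x.
Proof.
  intros Hf Hg.
  assert (Hc : continuous (fun t => cos (phase beta t)) x)
    by apply continuous_cos_comp, continuous_phase, Hpc.
  assert (Hs : continuous (fun t => sin (phase beta t)) x)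
    by apply continuous_sin_comp, continuous_phase, Hpc.
  split; [apply continuous_Rminus | apply continuous_Rplus]; apply continuous_Rmult; assumption.
Qed.

Lemma is_derive_rotated (f g : R -> R) (s df dg : R) :
  continuous beta s -> is_derive f s df -> is_derive g s dg ->
  is_derive (rotated_fst f g) s (- beta s * rotated_snd f g s
      + (cos (phase beta s) * df - sin (phase beta s) * dg)) /\
  is_derive (rotated_snd f g) s (beta s * rotated_fst f g s
      + (sin (phase beta s) * df + cos (phase beta s) * dg)).
Proof.
  intros Hs Hf Hg.
  assert (Hc : is_derive (fun t => cos (phase beta t)) s (beta s * - sin (phase beta s)))
    by (apply (is_derive_comp cos (phase beta));
        [apply is_derive_cos | apply is_derive_phase; auto]).
  assert (Hsn : is_derive (fun t => sin (phase beta t)) s (beta s * cos (phase beta s)))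
    by (apply (is_derive_comp sin (phase beta));
        [apply is_derive_sin | apply is_derive_phase; auto]).
  unfold rotated_fst, rotated_snd. split.
  - eapply is_derive_value;
      [apply is_derive_Rminus; apply is_derive_Rmult; eassumption | cbv beta; ring].
  - eapply is_derive_value;
      [apply is_derive_Rplus; apply is_derive_Rmult; eassumption | cbv beta; ring].
Qed.

Definition frame_x (j : nat) := rotated_fst (fun t => u t 0%nat j) (fun t => u t 1%nat j).
Definition frame_y (j : nat) := rotated_snd (fun t => u t 0%nat j) (fun t => u t 1%nat j).
Definition frame_px (j : nat) := rotated_fst (fun t => u t 2%nat j) (fun t => u t 3%nat j).
Definition frame_py (j : nat) := rotated_snd (fun t => u t 2%nat j) (fun t => u t 3%nat j).

Lemma hill_solution_frame (j : nat) : (j < 4)%nat ->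
  hill_solution beta (frame_x j) (frame_px j) /\ hill_solution beta (frame_y j) (frame_py j).
Proof.
  intro Hj.
  assert (Hc : forall i x, (i < 4)%nat -> continuous (fun t => u t i j) x)
    by (intros; now apply (continuous_evolution_matrix beta)).
  assert (Hd : forall i s, (i < 4)%nat -> continuous beta s ->
                 is_derive (fun t => u t i j) s (mulA (beta s) (u s) i j))
    by (intros; now apply is_derive_evolution_matrix).
  assert (C01 : forall x, continuous (frame_x j) x /\ continuous (frame_y j) x)
    by (intro; apply continuous_rotated; apply Hc; lia).
  assert (C23 : forall x, continuous (frame_px j) x /\ continuous (frame_py j) x)
    by (intro; apply continuous_rotated; apply Hc; lia).
  assert (D : forall s, continuous beta s ->
      (is_derive (frame_x j) s (frame_px j s) /\
       is_derive (frame_px j) s (- (beta s * beta s) * frame_x j s)) /\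
      (is_derive (frame_y j) s (frame_py j s) /\
       is_derive (frame_py j) s (- (beta s * beta s) * frame_y j s))).
  { intros s Hs.
    destruct (is_derive_rotated _ _ s _ _ Hs (Hd 0%nat s ltac:(lia) Hs) (Hd 1%nat s ltac:(lia) Hs))
      as [Dx Dy].
    destruct (is_derive_rotated _ _ s _ _ Hs (Hd 2%nat s ltac:(lia) Hs) (Hd 3%nat s ltac:(lia) Hs))
      as [Dpx Dpy].
    unfold mulA in Dx, Dy, Dpx, Dpy. cbn [Amat] in Dx, Dy, Dpx, Dpy.
    unfold frame_x, frame_y, frame_px, frame_py.
    split; split; (eapply is_derive_value; [eassumption | unfold rotated_fst, rotated_snd; ring]). }
  split; (split; [|split]).
  - intro x; exact (proj1 (C01 x)).
  - intro x; exact (proj1 (C23 x)).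
  - intros s Hs; exact (proj1 (D s Hs)).
  - intro x; exact (proj2 (C01 x)).
  - intro x; exact (proj2 (C23 x)).
  - intros s Hs; exact (proj2 (D s Hs)).
Qed.

Definition hill_matrix (t : R) : mat2 :=
  Mat2 (frame_x 0 t) (frame_x 2 t) (frame_px 0 t) (frame_px 2 t).

Lemma frame_0 (j : nat) :
  frame_x j 0 = u 0 0%nat j /\ frame_y j 0 = u 0 1%nat j /\
  frame_px j 0 = u 0 2%nat j /\ frame_py j 0 = u 0 3%nat j.
Proof.
  unfold frame_x, frame_y, frame_px, frame_py, rotated_fst, rotated_snd.
  rewrite phase_0, cos_0, sin_0. repeat split; ring.
Qed.

Lemma hill_matrix_0 : hill_matrix 0 = mat2_one.
Proof.
  destruct (frame_0 0) as [Ex0 [_ [Epx0 _]]]. destruct (frame_0 2) as [Ex2 [_ [Epx2 _]]].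
  unfold hill_matrix, mat2_one. rewrite Ex0, Epx0, Ex2, Epx2.
  rewrite !(evolution_matrix_0 beta u) by (auto; lia). reflexivity.
Qed.

Lemma frame_expand (j : nat) (T : R) : (j < 4)%nat -> 0 <= T ->
  frame_x j T = u 0 0%nat j * m11 (hill_matrix T) + u 0 2%nat j * m12 (hill_matrix T) /\
  frame_px j T = u 0 0%nat j * m21 (hill_matrix T) + u 0 2%nat j * m22 (hill_matrix T) /\
  frame_y j T = u 0 1%nat j * m11 (hill_matrix T) + u 0 3%nat j * m12 (hill_matrix T) /\
  frame_py j T = u 0 1%nat j * m21 (hill_matrix T) + u 0 3%nat j * m22 (hill_matrix T).
Proof.
  intros Hj HT.
  destruct (hill_solution_frame j Hj) as [Hxj Hyj].
  destruct (hill_solution_frame 0 ltac:(lia)) as [Hx0 _].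
  destruct (hill_solution_frame 2 ltac:(lia)) as [Hx2 _].
  pose proof hill_matrix_0 as H0. unfold hill_matrix, mat2_one in H0.
  injection H0 as Ex0 Ex2 Epx0 Epx2.
  destruct (hill_solution_expand beta _ _ _ _ _ _ Hpc Hxj Hx0 Hx2 Ex0 Epx0 Ex2 Epx2 T HT)
    as [Ax Apx].
  destruct (hill_solution_expand beta _ _ _ _ _ _ Hpc Hyj Hx0 Hx2 Ex0 Epx0 Ex2 Epx2 T HT)
    as [Ay Apy].
  destruct (frame_0 j) as [Ex [Ey [Epx Epy]]].
  rewrite Ex, Epx in Ax, Apx. rewrite Ey, Epy in Ay, Apy. auto.
Qed.

Lemma evolution_matrix_frame_to_lab (T : R) (i j : nat) : 0 <= T -> (i < 4)%nat -> (j < 4)%nat ->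
  u T i j = frame_to_lab (cos (phase beta T)) (sin (phase beta T)) (hill_matrix T) i j.
Proof.
  intros HT Hi Hj.
  destruct (rotated_inv (fun t => u t 0%nat j) (fun t => u t 1%nat j) T) as [U0 U1].
  destruct (rotated_inv (fun t => u t 2%nat j) (fun t => u t 3%nat j) T) as [U2 U3].
  fold (frame_x j) (frame_y j) (frame_px j) (frame_py j) in U0, U1, U2, U3.
  destruct (frame_expand j T Hj HT) as [Ex [Epx [Ey Epy]]].
  rewrite Ex, Ey in U0, U1. rewrite Epx, Epy in U2, U3.
  rewrite !(evolution_matrix_0 beta u) in U0, U1, U2, U3 by (auto; lia).
  destruct i as [|[|[|[|i]]]]; [rewrite U0 | rewrite U1 | rewrite U2 | rewrite U3 | lia];
    (destruct j as [|[|[|[|j]]]]; [..| lia]); cbn [frame_to_lab Nat.eqb]; ring.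
Qed.

Lemma hill_matrix_det (T : R) : 0 <= T -> mat2_det (hill_matrix T) = 1.
Proof.
  intro HT. destruct (hill_solution_frame 0 ltac:(lia)) as [Hx0 _].
  destruct (hill_solution_frame 2 ltac:(lia)) as [Hx2 _].
  unfold mat2_det, hill_matrix; cbn [m11 m12 m21 m22].
  rewrite (hill_wronskian beta _ _ _ _ Hpc Hx0 Hx2 T HT).
  pose proof hill_matrix_0 as H0. unfold hill_matrix, mat2_one in H0.
  injection H0 as -> -> -> ->. ring.
Qed.

(* By periodicity of [beta], the columns translated by one period are again solutions, whose
   initial data are the columns of [hill_matrix 1]. *)
Lemma hill_matrix_succ (T : R) : 0 <= T ->
  hill_matrix (T + 1) = mat2_mul (hill_matrix T) (hill_matrix 1).
Proof.
  intro HT.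
  destruct (hill_solution_frame 0 ltac:(lia)) as [Hx0 _].
  destruct (hill_solution_frame 2 ltac:(lia)) as [Hx2 _].
  pose proof hill_matrix_0 as H0. unfold hill_matrix, mat2_one in H0.
  injection H0 as Ex0 Ex2 Epx0 Epx2.
  destruct (hill_solution_expand beta _ _ _ _ _ _ Hpc (hill_solution_shift beta _ _ Hper Hx0)
              Hx0 Hx2 Ex0 Epx0 Ex2 Epx2 T HT) as [A11 A21].
  destruct (hill_solution_expand beta _ _ _ _ _ _ Hpc (hill_solution_shift beta _ _ Hper Hx2)
              Hx0 Hx2 Ex0 Epx0 Ex2 Epx2 T HT) as [A12 A22].
  rewrite !Rplus_0_l in A11, A21, A12, A22.
  unfold hill_matrix, mat2_mul; cbn [m11 m12 m21 m22].
  rewrite A11, A21, A12, A22. f_equal; ring.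
Qed.

Lemma hill_matrix_shift (T : R) (k : nat) : 0 <= T ->
  hill_matrix (T + INR k) = mat2_mul (hill_matrix T) (mat2_pow (hill_matrix 1) k).
Proof.
  intro HT. induction k as [|k IH].
  - rewrite Rplus_0_r. destruct (hill_matrix T); unfold mat2_mul; cbn. f_equal; ring.
  - rewrite S_INR, <- Rplus_assoc, hill_matrix_succ, IH; [symmetry; apply mat2_mulA|].
    pose proof (pos_INR k). lra.
Qed.

Lemma is_id4_evolution_matrix_nat (k : nat) :
  is_id4 (u (INR k)) <-> hill_matrix (INR k) = mat2_one.
Proof.
  pose proof (phase_periodic beta k 0 Hpc Hper Hmean (Rle_refl 0)) as Hph.
  rewrite Rplus_0_l, phase_0 in Hph.
  assert (Hu : forall i j, (i < 4)%nat -> (j < 4)%nat ->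
                 u (INR k) i j = frame_to_lab 1 0 (hill_matrix (INR k)) i j).
  { intros i j Hi Hj. rewrite <- cos_0, <- Hph at 1. rewrite <- sin_0, <- Hph.
    apply evolution_matrix_frame_to_lab; [apply pos_INR | assumption..]. }
  rewrite <- is_id4_frame_to_lab.
  split; intros Hid i j Hi Hj; [rewrite <- Hu | rewrite Hu]; auto.
Qed.

Lemma hill_matrix_nat (k : nat) : hill_matrix (INR k) = mat2_pow (hill_matrix 1) k.
Proof.
  rewrite <- (Rplus_0_l (INR k)), hill_matrix_shift, hill_matrix_0 by lra.
  apply mat2_mul1l.
Qed.

Definition lab_coordinate (z : nat -> R) (i : nat) (t : R) : R :=
  u t i 0%nat * z 0%nat + u t i 1%nat * z 1%nat + u t i 2%nat * z 2%nat + u t i 3%nat * z 3%nat.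

Lemma continuous_lab_coordinate (z : nat -> R) (i : nat) (x : R) : (i < 4)%nat ->
  continuous (lab_coordinate z i) x.
Proof.
  intro Hi.
  assert (Hl : forall l, (l < 4)%nat -> continuous (fun t => u t i l * z l) x).
  { intros l Hl. apply continuous_Rmult; [| apply continuous_const].
    now apply (continuous_evolution_matrix beta). }
  apply continuous_Rplus; [apply continuous_Rplus; [apply continuous_Rplus|]|]; apply Hl; lia.
Qed.

Lemma lab_coordinate_translates (z : nat -> R) (i : nat) (t : R) : (i < 2)%nat -> 0 <= t ->
  exists C, forall k, lab_coordinate z i (t + INR k) = mat2_dot C (mat2_pow (hill_matrix 1) k).
Proof.
  intros Hi Ht.
  set (c := cos (phase beta t)). set (s := sin (phase beta t)). set (m := hill_matrix t).
  assert (Hk : forall k l, (l < 4)%nat -> u (t + INR k) i l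
                 = frame_to_lab c s (mat2_mul m (mat2_pow (hill_matrix 1) k)) i l).
  { intros k l Hl. pose proof (pos_INR k).
    rewrite evolution_matrix_frame_to_lab, phase_periodic, hill_matrix_shift; auto;
      first [lra | lia]. }
  destruct i as [|[|i]]; [| | lia].
  - exists (Mat2 ((c * z 0%nat + s * z 1%nat) * m11 m) ((c * z 2%nat + s * z 3%nat) * m11 m)
                 ((c * z 0%nat + s * z 1%nat) * m12 m) ((c * z 2%nat + s * z 3%nat) * m12 m)).
    intro k. unfold lab_coordinate. rewrite !Hk by lia.
    destruct (mat2_pow (hill_matrix 1) k).
    unfold mat2_mul, mat2_dot; cbn [frame_to_lab m11 m12 m21 m22]. ring.
  - exists (Mat2 ((- s * z 0%nat + c * z 1%nat) * m11 m) ((- s * z 2%nat + c * z 3%nat) * m11 m)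
                 ((- s * z 0%nat + c * z 1%nat) * m12 m) ((- s * z 2%nat + c * z 3%nat) * m12 m)).
    intro k. unfold lab_coordinate. rewrite !Hk by lia.
    destruct (mat2_pow (hill_matrix 1) k).
    unfold mat2_mul, mat2_dot; cbn [frame_to_lab m11 m12 m21 m22]. ring.
Qed.

Lemma sum_lab_coordinate_translates (z : nat -> R) (i n : nat) (t : R) : (i < 2)%nat -> 0 <= t ->
  mat2_pow (hill_matrix 1) n = mat2_one -> hill_matrix 1 <> mat2_one ->
  sum_lt (fun k => lab_coordinate z i (t + INR k)) n = 0.
Proof.
  intros Hi Ht Hclosed Hne.
  destruct (lab_coordinate_translates z i t Hi Ht) as [C HC].
  rewrite (sum_lt_ext _ _ n HC), sum_lt_mat2_dot_pow, mat2_geom_eq0; auto.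
  - unfold mat2_dot; cbn. ring.
  - apply hill_matrix_det. lra.
Qed.

End RotatingFrame.

Theorem proposition3 (beta : R -> R) (u : R -> mat4) (n : nat) :
  piecewise_continuous beta ->
  (forall t, beta (t + 1) = beta t) ->
  (forall k : Z, beta (IZR k) = 0) ->
  is_RInt beta 0 1 0 ->
  evolution_matrix beta u ->
  (1 < n)%nat ->
  is_id4 (u (INR n)) ->
  (forall j : nat, (1 <= j < n)%nat -> ~ is_id4 (u (INR j))) ->
  forall (z : nat -> R) (i : nat), (i < 2)%nat -> loop_center u n z i = 0.
Proof.
  intros Hpc Hper _ Hmean Hev Hn Hclosed Hfirst z i Hi.
  assert (HMn : mat2_pow (hill_matrix beta u 1) n = mat2_one).
  { rewrite <- (hill_matrix_nat beta u) by assumption.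
    now apply (is_id4_evolution_matrix_nat beta u Hpc Hper Hmean Hev). }
  assert (HM1 : hill_matrix beta u 1 <> mat2_one).
  { intro HM. apply (Hfirst 1%nat); [lia|].
    now apply (is_id4_evolution_matrix_nat beta u Hpc Hper Hmean Hev 1). }
  change (/ INR n * RInt (lab_coordinate u z i) 0 (INR n) = 0).
  rewrite (RInt_eq0_of_sum_translates _ n); [ring | |].
  - intro x. apply (continuous_lab_coordinate beta); [assumption | lia].
  - intros t Ht. apply (sum_lab_coordinate_translates beta); auto; lra.
Qed.
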